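(* For every ProbNetKAT program $p$, the matrix $\mathcal{S}[\![p]\!]$ indexed by $2^{\mathsf{Pk}}\times 2^{\mathsf{Pk}}$ is (right-)stochastic: all entries are nonnegative and each row sums to $1$.
   Context: $\mathsf{Pk}$ is a finite set of packets (records of finitely many fields with finitely many values). For each ProbNetKAT program $p$, $\mathcal{B}[\![p]\!]\in[0,1]^{2^{\mathsf{Pk}}\times 2^{\mathsf{Pk}}}$ denotes its matrix semantics, defined compositionally ($[\varphi]$ = Iverson bracket): $\mathcal{B}[\![\mathsf{false}]\!]_{ab}=[b=\emptyset]$; $\mathcal{B}[\![\mathsf{true}]\!]_{ab}=[a=b]$; $\mathcal{B}[\![f=n]\!]_{ab}=[b=\{\pi\in a:\pi.f=n\}]$; $\mathcal{B}[\![\neg t]\!]_{ab}=[b\subseteq a]\mathcal{B}[\![t]\!]_{a,a-b}$; $\mathcal{B}[\![f\leftarrow n]\!]_{ab}=[b=\{\pi[f:=n]:\pi\in a\}]$; $\mathcal{B}[\![p\,\&\,q]\!]_{ab}=\sum_{c,d}[c\cup d=b]\mathcal{B}[\![p]\!]_{ac}\mathcal{B}[\![q]\!]_{ad}$; $\mathcal{B}[\![p;q]\!]=\mathcal{B}[\![p]\!]\mathcal{B}[\![q]\!]$; $\mathcal{B}[\![p\oplus_r q]\!]=r\mathcal{B}[\![p]\!]+(1-r)\mathcal{B}[\![q]\!]$; $\mathcal{B}[\![p^*]\!]_{ab}=\lim_n\mathcal{B}[\![p^{(n)}]\!]_{ab}$, where $p^{(0)}=\mathsf{true}$, $p^{(n+1)}=\mathsf{true}\,\&\,(p;p^{(n)})$.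 (Here $\&$ is union and $;$ sequencing; for predicates, $\&$ is disjunction and $;$ conjunction.) The small-step matrix is $\mathcal{S}[\![p]\!]_{(a,b),(a',b')} := [b'=b\cup a]\cdot\mathcal{B}[\![p]\!]_{a,a'}$ for $a,b,a',b'\subseteq\mathsf{Pk}$. *)

From HB Require Import structures.
From mathcomp Require Import all_boot all_order all_algebra.
From mathcomp Require Import all_classical all_reals topology normedtype sequences.
Set Implicit Arguments. Unset Strict Implicit. Unset Printing Implicit Defensive.
Import Order.TTheory GRing.Theory Num.Theory numFieldNormedType.Exports.
Local Open Scope ring_scope.

Definition packet (F V : finType) := {ffun F -> V}.

Inductive pred_pnk (F V : finType) : Type :=
| PFalse
| PTrue
| PTest of F & V
| PNeg of pred_pnk F V
| POr of pred_pnk F V & pred_pnk F V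
| PAnd of pred_pnk F V & pred_pnk F V.

Inductive prog (R : Type) (F V : finType) : Type :=
| Pred of pred_pnk F V
| Assign of F & V
| Par of prog R F V & prog R F V
| Seq of prog R F V & prog R F V
| Choice of prog R F V & R & prog R F V
| Star of prog R F V.

Fixpoint wf_prog (R : realType) (F V : finType) (p : prog R F V) : Prop :=
  match p with
  | Pred _ | Assign _ _ => True
  | Par p q | Seq p q => wf_prog p /\ wf_prog q
  | Choice p r q => 0 <= r <= 1 /\ wf_prog p /\ wf_prog q
  | Star p => wf_prog p
  end.

Section Sem.
Variables (R : realType) (F V : finType).
Local Notation Pk := (packet F V).

Definition mx := {set Pk} -> {set Pk} -> R.

Definition iv (b : bool) : R := if b then 1 else 0.

Definition mx_id : mx := fun a b => iv (a == b).
Definition mx_mul (M N : mx) : mx := fun a b => \sum_(c : {set Pk}) M a c * N c b.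
Definition mx_par (M N : mx) : mx :=
  fun a b => \sum_(c : {set Pk}) \sum_(d : {set Pk}) iv (c :|: d == b) * M a c * N a d.
Definition mx_choice (r : R) (M N : mx) : mx := fun a b => r * M a b + (1 - r) * N a b.

Definition upd (pi : Pk) (f : F) (n : V) : Pk :=
  [ffun g => if g == f then n else pi g].

Fixpoint Bpred (t : pred_pnk F V) : mx :=
  match t with
  | PFalse => fun a b => iv (b == finset.set0)
  | PTrue => mx_id
  | PTest f n => fun a b => iv (b == [set pi in a | pi f == n])
  | PNeg t => fun a b => iv (b \subset a) * Bpred t a (a :\: b)
  | POr t u => mx_par (Bpred t) (Bpred u)
  | PAnd t u => mx_mul (Bpred t) (Bpred u)
  end.

(* B[[p^(n)]] from B[[p]]: p^(0) = true, p^(n+1) = true & (p ; p^(n)) *)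
Fixpoint star_approx (M : mx) (n : nat) : mx :=
  match n with
  | 0 => mx_id
  | n'.+1 => mx_par mx_id (mx_mul M (star_approx M n'))
  end.

Fixpoint B (p : prog R F V) : mx :=
  match p with
  | Pred t => Bpred t
  | Assign f n => fun a b => iv (b == [set upd pi f n | pi in a])
  | Par p q => mx_par (B p) (B q)
  | Seq p q => mx_mul (B p) (B q)
  | Choice p r q => mx_choice r (B p) (B q)
  | Star p => fun a b => limn (fun n : nat => (star_approx (B p) n a b : R))
  end.

Definition S (p : prog R F V) (x y : {set Pk} * {set Pk}) : R :=
  iv (y.2 == x.2 :|: x.1) * B p x.1 y.1.

End Sem.

From HB Require Import structures.
From mathcomp Require Import all_boot all_order all_algebra.
From mathcomp Require Import all_classical all_reals topology normedtype sequences.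
Import Order.TTheory GRing.Theory Num.Theory numFieldNormedType.Exports.
Local Open Scope ring_scope.
Set Implicit Arguments. Unset Strict Implicit.

(* Every ProbNetKAT combinator maps stochastic matrices to stochastic
   matrices; negation needs in addition that predicates never add packets.
   For the star, the approximants p^(n) are stochastic and their outputs only
   grow with n, so the mass they put on outputs contained in a fixed set c is
   nonincreasing in n, hence convergent.  Peeling off the proper subsets of
   the output, by induction on its size, gives convergence of every entry, and
   a pointwise limit of stochastic matrices is stochastic.  Finally S[p] moves
   its second component deterministically, so it inherits stochasticity from
   B[p]. *)

Section FiniteSums.
Variable R : realType.

Definition stochastic (I : finType) (M : I -> I -> R) :=
  (forall i j, 0 <= M i j) /\ (forall i, \sum_j M i j = 1).

Lemma cvgn_sum (I : finType) (P : pred I) (u : I -> R ^nat) :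
  (forall i, P i -> cvgn (u i)) ->
  ((fun n => \sum_(i | P i) u i n) @ \oo --> \sum_(i | P i) limn (u i))%classic.
Proof. by move=> cvg_u; apply: cvg_big => //; exact: add_continuous. Qed.

Lemma iv_ge0 b : 0 <= iv R b. Proof. by case: b; rewrite /iv. Qed.

Lemma iv_le1 b : iv R b <= 1. Proof. by case: b; rewrite /iv. Qed.

Lemma sum_iv_eq (I : finType) (i : I) (f : I -> R) :
  \sum_j iv R (i == j) * f j = f i.
Proof.
rewrite (bigD1 i) //= eqxx mul1r big1 ?addr0 // => j /negPf.
by rewrite eq_sym /iv => ->; rewrite mul0r.
Qed.

Lemma sum_iv_eq1 (I : finType) (i : I) : \sum_j iv R (i == j) = 1.
Proof.
by rewrite -[RHS](sum_iv_eq i (fun=> 1)); apply: eq_bigr => j _; rewrite mulr1.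
Qed.

Lemma iv_andb b1 b2 : iv R (b1 && b2) = iv R b1 * iv R b2.
Proof. by case: b1; case: b2; rewrite /iv ?mulr1 ?mulr0. Qed.

End FiniteSums.

Section ProbNetKAT.
Variables (R : realType) (F V : finType).
Local Notation Pk := (packet F V).
Local Notation mx := (@mx R F V).
Local Notation iv := (@iv R).

Definition shrinking (M : mx) :=
  forall a b : {set Pk}, ~~ (b \subset a) -> M a b = 0.

Lemma stochastic_det (g : {set Pk} -> {set Pk}) :
  stochastic (fun a b => iv (b == g a)).
Proof.
split=> [a b|a]; first exact: iv_ge0.
by under eq_bigr do rewrite eq_sym; rewrite sum_iv_eq1.
Qed.

Lemma shrinking_det (g : {set Pk} -> {set Pk}) :
  (forall a, g a \subset a) -> shrinking (fun a b => iv (b == g a)).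
Proof. by move=> sub_g a b; case: eqP => // ->; rewrite sub_g. Qed.

Lemma stochastic_id : stochastic (@mx_id R F V).
Proof. by split=> [a b|a]; [exact: iv_ge0 | exact: sum_iv_eq1]. Qed.

Lemma shrinking_id : shrinking (@mx_id R F V).
Proof. by move=> a b; rewrite /mx_id; case: eqP => // ->; rewrite subxx. Qed.

Lemma stochastic_mul (M N : mx) :
  stochastic M -> stochastic N -> stochastic (mx_mul M N).
Proof.
move=> [M_ge0 M_sum] [N_ge0 N_sum]; split=> [a b|a].
  by apply: sumr_ge0 => c _; apply: mulr_ge0.
rewrite /mx_mul exchange_big /= -[RHS](M_sum a); apply: eq_bigr => c _.
by rewrite -mulr_sumr N_sum mulr1.
Qed.

Lemma shrinking_mul (M N : mx) :
  shrinking M -> shrinking N -> shrinking (mx_mul M N).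
Proof.
move=> M_shr N_shr a b not_ba; apply: big1 => c _.
have [sub_ca|] := boolP (c \subset a); last by move/M_shr ->; rewrite mul0r.
have [sub_bc|] := boolP (b \subset c); last by move/N_shr ->; rewrite mulr0.
by move: not_ba; rewrite (fintype.subset_trans sub_bc sub_ca).
Qed.

Lemma stochastic_par (M N : mx) :
  stochastic M -> stochastic N -> stochastic (mx_par M N).
Proof.
move=> [M_ge0 M_sum] [N_ge0 N_sum]; split=> [a b|a].
  by do 2![apply: sumr_ge0 => ? _]; rewrite !mulr_ge0 ?iv_ge0.
rewrite /mx_par exchange_big /= -[RHS](M_sum a); apply: eq_bigr => c _.
rewrite exchange_big /= -[RHS]mulr1 -(N_sum a) mulr_sumr; apply: eq_bigr => d _.
by rewrite -!mulr_suml sum_iv_eq1 mul1r.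
Qed.

Lemma shrinking_par (M N : mx) :
  shrinking M -> shrinking N -> shrinking (mx_par M N).
Proof.
move=> M_shr N_shr a b not_ba; apply: big1 => c _; apply: big1 => d _.
case: eqP => [eq_cd_b|]; last by rewrite /iv !mul0r.
have [sub_ca|] := boolP (c \subset a); last by move/M_shr ->; rewrite mulr0 mul0r.
have [sub_da|] := boolP (d \subset a); last by move/N_shr ->; rewrite mulr0.
by move: not_ba; rewrite -eq_cd_b finset.subUset sub_ca sub_da.
Qed.

Lemma stochastic_choice r (M N : mx) :
  0 <= r <= 1 -> stochastic M -> stochastic N -> stochastic (mx_choice r M N).
Proof.
move=> /andP[r_ge0 r_le1] [M_ge0 M_sum] [N_ge0 N_sum]; split=> [a b|a].
  by rewrite /mx_choice addr_ge0 ?mulr_ge0 ?subr_ge0.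
by rewrite /mx_choice big_split /= -!mulr_sumr M_sum N_sum !mulr1 addrC subrK.
Qed.

Definition mx_neg (M : mx) : mx :=
  fun a b : {set Pk} => iv (b \subset a) * M a (a :\: b).

Lemma shrinking_neg (M : mx) : shrinking (mx_neg M).
Proof. by move=> a b /negPf not_ba; rewrite /mx_neg not_ba /iv mul0r. Qed.

(* [b |-> a :\: b] is an involution of the subsets of [a]; outside them
   [M a] vanishes because [M] is shrinking. *)
Lemma stochastic_neg (M : mx) :
  stochastic M -> shrinking M -> stochastic (mx_neg M).
Proof.
move=> [M_ge0 M_sum] M_shr; split=> [a b|a].
  by rewrite mulr_ge0 ?iv_ge0.
have sum_sub : \sum_(c : {set Pk} | c \subset a) M a c = 1.
  rewrite -(M_sum a) big_mkcond; apply: eq_bigr => c _.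
  by case: ifPn => // /M_shr ->.
rewrite -{}sum_sub [RHS](reindex_onto (fun b => a :\: b) (fun b => a :\: b)) /=.
  rewrite [RHS]big_mkcond; apply: eq_bigr => b _.
  rewrite finset.subsetDl finset.setDDr finset.setDv finset.set0U.
  rewrite (sameP eqP finset.setIidPr).
  by rewrite /mx_neg /iv; case: ifP; rewrite ?mul1r ?mul0r.
by move=> c /finset.setIidPr sub_ca; rewrite finset.setDDr finset.setDv finset.set0U.
Qed.

Lemma Bpred_shrinking (t : pred_pnk F V) : shrinking (Bpred R t).
Proof.
elim: t => [||f n|t _|t t_shr u u_shr|t t_shr u u_shr] /=.
- by apply: shrinking_det => a; rewrite finset.sub0set.
- exact: shrinking_id.
- by apply: shrinking_det => a; rewrite setIdE subsetIl.
- exact: shrinking_neg.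
- exact: shrinking_par.
- exact: shrinking_mul.
Qed.

Lemma Bpred_stochastic (t : pred_pnk F V) : stochastic (Bpred R t).
Proof.
elim: t => [||f n|t t_sto|t t_sto u u_sto|t t_sto u u_sto] /=.
- exact: stochastic_det.
- exact: stochastic_id.
- exact: stochastic_det.
- by apply: stochastic_neg t_sto (Bpred_shrinking t).
- exact: stochastic_par.
- exact: stochastic_mul.
Qed.

Lemma stochastic_lim (M : nat -> mx) :
  (forall n, stochastic (M n)) -> (forall a b, cvgn (fun n => M n a b)) ->
  stochastic (fun a b => limn (fun n => M n a b)).
Proof.
move=> M_sto M_cvg; split=> [a b|a].
  by apply: limr_ge => //; apply: nearW => n; case: (M_sto n).
have sum_cvg := cvgn_sum (fun b (_ : true) => M_cvg a b).
have sum1 : (fun n => \sum_b M n a b) = fun=> 1.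
  by apply: funext => n; case: (M_sto n).
rewrite sum1 in sum_cvg.
by rewrite -(cvg_lim (@Rhausdorff R) sum_cvg) lim_cst.
Qed.

Section Star.
Variable M : mx.
Hypothesis M_sto : stochastic M.
Local Notation st := (star_approx M).

Lemma stochastic_star_approx n : stochastic (st n).
Proof.
elim: n => [|n IH] /=; first exact: stochastic_id.
exact: stochastic_par stochastic_id (stochastic_mul M_sto IH).
Qed.

Lemma star_approxS n a b :
  st n.+1 a b = \sum_c iv (a :|: c == b) * mx_mul M (st n) a c.
Proof.
rewrite /= /mx_par exchange_big /=; apply: eq_bigr => d _.
rewrite -mulr_suml; congr (_ * _).
rewrite -[RHS](sum_iv_eq a (fun c => iv (c :|: d == b))).
by apply: eq_bigr => c _; rewrite /mx_id mulrC.
Qed.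

Definition mass_sub n (a c : {set Pk}) :=
  \sum_(b : {set Pk}) iv (b \subset c) * st n a b.

Lemma mass_sub0 a c : mass_sub 0 a c = iv (a \subset c).
Proof.
by rewrite /mass_sub /= /mx_id; under eq_bigr do rewrite mulrC; rewrite sum_iv_eq.
Qed.

Lemma mass_subS n a c :
  mass_sub n.+1 a c = iv (a \subset c) * \sum_e M a e * mass_sub n e c.
Proof.
rewrite /mass_sub; under eq_bigr do rewrite star_approxS mulr_sumr.
rewrite exchange_big /=.
under eq_bigr => y _ do under eq_bigr => b _ do rewrite mulrCA.
under eq_bigr => y _ do rewrite sum_iv_eq finset.subUset iv_andb -mulrA.
rewrite -mulr_sumr; congr (_ * _).
rewrite /mx_mul; under eq_bigr => y _ do rewrite mulr_sumr.
rewrite exchange_big /=; apply: eq_bigr => e _; rewrite mulr_sumr.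
by apply: eq_bigr => y _; rewrite mulrCA.
Qed.

Lemma mass_sub_ge0 n a c : 0 <= mass_sub n a c.
Proof.
have [st_ge0 _] := stochastic_star_approx n.
by apply: sumr_ge0 => b _; rewrite mulr_ge0 ?iv_ge0 ?st_ge0.
Qed.

Lemma mass_sub_le1 n a c : mass_sub n a c <= 1.
Proof.
have [st_ge0 st_sum] := stochastic_star_approx n.
by rewrite -(st_sum a); apply: ler_sum => b _; rewrite ler_piMl ?iv_le1.
Qed.

Lemma mass_sub_nonincreasing a c : nonincreasing_seq (fun n => mass_sub n a c).
Proof.
have [M_ge0 M_sum] := M_sto.
apply/nonincreasing_seqP => n; elim: n a => [|n IH] a.
  rewrite mass_subS mass_sub0 -[leRHS]mulr1 ler_wpM2l ?iv_ge0 // -(M_sum a).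
  by apply: ler_sum => e _; rewrite ler_piMr ?mass_sub_le1.
rewrite (mass_subS n.+1) (mass_subS n) ler_wpM2l ?iv_ge0 //.
by apply: ler_sum => e _; rewrite ler_wpM2l.
Qed.

Lemma mass_sub_cvg a c : cvgn (fun n => mass_sub n a c).
Proof.
apply: nonincreasing_is_cvgn; first exact: mass_sub_nonincreasing.
by exists 0 => _ [n _ <-]; exact: mass_sub_ge0.
Qed.

Lemma mass_sub_split n a b :
  mass_sub n a b = st n a b + \sum_(b' : {set Pk} | b' \proper b) st n a b'.
Proof.
rewrite /mass_sub (bigD1 b) //= subxx /iv mul1r; congr (_ + _).
rewrite big_mkcond [RHS]big_mkcond; apply: eq_bigr => b' _.
rewrite finset.properEneq.
by case: (b' != b); case: (b' \subset b); rewrite ?mul1r ?mul0r.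
Qed.

Lemma star_approx_cvg a b : cvgn (fun n => st n a b).
Proof.
have [k] := ubnP #|b|; elim: k b => // k IH b lt_b_k.
have -> : (fun n => st n a b) =
          (fun n => mass_sub n a b - \sum_(b' : {set Pk} | b' \proper b) st n a b').
  by apply: funext => n; rewrite mass_sub_split addrK.
apply: is_cvgB; first exact: mass_sub_cvg.
apply/cvg_ex; eexists; apply: cvgn_sum => b' /proper_card lt_b'b.
exact: IH (leq_trans lt_b'b lt_b_k).
Qed.

End Star.

Lemma B_stochastic (p : prog R F V) : wf_prog p -> stochastic (B p).
Proof.
elim: p => [t|f n|p IHp q IHq|p IHp q IHq|p IHp r q IHq|p IHp] /=.
- by move=> _; exact: Bpred_stochastic.
- by move=> _; exact: stochastic_det.
- by case=> /IHp p_sto /IHq q_sto; exact: stochastic_par.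
- by case=> /IHp p_sto /IHq q_sto; exact: stochastic_mul.
- by case=> r01 [/IHp p_sto /IHq q_sto]; exact: stochastic_choice.
- move=> /IHp p_sto.
  exact: stochastic_lim (stochastic_star_approx p_sto) (star_approx_cvg p_sto).
Qed.

Lemma stochastic_small_step (M : mx) : stochastic M ->
  stochastic (fun x y : {set Pk} * {set Pk} => iv (y.2 == x.2 :|: x.1) * M x.1 y.1).
Proof.
move=> [M_ge0 M_sum]; split=> [x y|[a b]]; first by rewrite mulr_ge0 ?iv_ge0.
rewrite -(pair_bigA _ (fun a' b' => iv (b' == b :|: a) * M a a')) /=.
rewrite -[RHS](M_sum a).
apply: eq_bigr => a' _; rewrite -mulr_suml.
by under eq_bigr do rewrite eq_sym; rewrite sum_iv_eq1 mul1r.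
Qed.

End ProbNetKAT.

Theorem lemma4p1 (R : realType) (F V : finType) (p : prog R F V) :
  wf_prog p ->
  (forall x y : {set packet F V} * {set packet F V}, 0 <= S p x y) /\
  (forall x : {set packet F V} * {set packet F V},
      \sum_(y : {set packet F V} * {set packet F V}) S p x y = 1).
Proof. by move=> /B_stochastic; exact: stochastic_small_step. Qed.
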